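(* Let $\lambda>0$, $\gamma\ge0$ and $\omega\in[-\pi,\pi]$, and put $\delta=(\sqrt{\gamma^2+1}-1)/\gamma$ (with $\delta=0$ if $\gamma=0$). The Kullback–Leibler divergence $$KL(\mathrm{GCPC}\,\|\,\mathrm{CIPC})=\int_{-\pi}^{\pi}f_{GCPC}(\theta)\log\frac{f_{GCPC}(\theta)}{f_{CIPC}(\theta)}\,d\theta$$ between $\mathrm{GCPC}(\omega,\gamma,\lambda)$ and $\mathrm{CIPC}(\omega,\gamma)$ equals $$-\frac12\log\lambda+2\log\!\left(\frac{\sqrt{\lambda}(1-\delta^2)+1+\delta^2}{2}\right)-\log(1-\delta^2)+E_{WC}\!\left[\log\!\left(\sqrt{\gamma^2+1}-\frac{\gamma\cos\psi}{\sqrt{1+(\lambda-1)\sin^2\psi}}\right)\right],$$ where the expectation is over $\psi\sim\mathrm{WC}(0,\delta)$.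
   Context: For $\lambda>0$, $\gamma\ge0$ and $\omega\in[-\pi,\pi]$, the distribution $\mathrm{GCPC}(\omega,\gamma,\lambda)$ is the distribution on the circle with density $$f_{GCPC}(\theta)=\frac{1}{2\pi\sqrt{\lambda}\,\bigl(b\sqrt{\gamma^2+1}-\gamma\cos\phi\,\sqrt{b}\bigr)},\qquad \phi=\theta-\omega,\quad b=\cos^2\phi+\frac{\sin^2\phi}{\lambda}.$$ The distribution $\mathrm{CIPC}(\omega,\gamma)$ has density $f_{CIPC}(\theta)=\dfrac{1}{2\pi(\sqrt{\gamma^2+1}-\gamma\cos(\theta-\omega))}$. For $0\le\delta<1$, the distribution $\mathrm{WC}(0,\delta)$ has density $\dfrac{1-\delta^2}{2\pi(1+\delta^2-2\delta\cos\psi)}$ on $(-\pi,\pi]$. *)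

From Stdlib Require Import Reals.
From Coquelicot Require Import Coquelicot.
Open Scope R_scope.

Definition f_GCPC (omega gamma lambda theta : R) : R :=
  let phi := theta - omega in
  let b := (cos phi)^2 + (sin phi)^2 / lambda in
  1 / (2 * PI * sqrt lambda *
       (b * sqrt (gamma^2 + 1) - gamma * cos phi * sqrt b)).

Definition f_CIPC (omega gamma theta : R) : R :=
  1 / (2 * PI * (sqrt (gamma^2 + 1) - gamma * cos (theta - omega))).

Definition f_WC (delta psi : R) : R :=
  (1 - delta^2) / (2 * PI * (1 + delta^2 - 2 * delta * cos psi)).

Definition delta_of (gamma : R) : R :=
  if Req_EM_T gamma 0 then 0 else (sqrt (gamma^2 + 1) - 1) / gamma.

Definition KL_GCPC_CIPC (omega gamma lambda : R) : R :=
  RInt (fun theta => f_GCPC omega gamma lambda theta *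
          ln (f_GCPC omega gamma lambda theta / f_CIPC omega gamma theta))
       (-PI) PI.

Definition E_WC (delta : R) (h : R -> R) : R :=
  RInt (fun psi => f_WC delta psi * h psi) (-PI) PI.

From Stdlib Require Import Reals Lra.
From Coquelicot Require Import Coquelicot.
Open Scope R_scope.

(* Rotating by [omega] reduces to [omega = 0].  The substitution
   [theta = arg (cos u + i sqrt lambda sin u)], with [d theta / d u = sqrt lambda / W u] where
   [W u = cos^2 u + lambda sin^2 u], carries the GCPC law to the CIPC law, which is WC(0, delta); at
   such [theta] the density ratio is [W u * B u / (sqrt lambda * A u)], with
   [A u = sqrt (gamma^2 + 1) - gamma cos u] and [B] the term of the statement.  The divergence is
   therefore a WC(0, delta) expectation of four logarithms.  Those of [A] and [W] follow from the
   Poisson-Jensen formula [E_WC r (ln (1 + s^2 - 2 s cos u)) = 2 ln (1 - r s)], proved by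
   differentiating in [s]: [A u] is proportional to [1 + delta^2 - 2 delta cos u], [W u] to
   [1 + q^2 - 2 q cos 2u] with [q = (sqrt lambda - 1) / (sqrt lambda + 1)], and doubling the angle
   maps WC(r) to WC(r^2). *)

Lemma sin_cos_sq (x : R) : sin x ^ 2 + cos x ^ 2 = 1.
Proof. pose proof (sin2_cos2 x) as H. unfold Rsqr in H. lra. Qed.

Lemma cos_periodic (x : R) : cos (x + 2 * PI) = cos x.
Proof. rewrite cos_plus, cos_2PI, sin_2PI. ring. Qed.

Lemma sin_periodic (x : R) : sin (x + 2 * PI) = sin x.
Proof. rewrite sin_plus, cos_2PI, sin_2PI. ring. Qed.

Lemma ln_sqrt (x : R) : 0 < x -> ln (sqrt x) = ln x / 2.
Proof.
  intros Hx. pose proof (sqrt_lt_R0 x Hx).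
  rewrite <- (sqrt_sqrt x) at 2 by lra. rewrite ln_mult by auto. field.
Qed.

Lemma div_sqrt_le_1 (C W : R) : 0 < W -> C ^ 2 <= W -> C / sqrt W <= 1.
Proof.
  intros HW HC. pose proof (sqrt_lt_R0 _ HW).
  apply (Rmult_le_reg_r (sqrt W)); auto. field_simplify; [| lra].
  destruct (Rle_or_lt C 0); [lra |].
  rewrite <- (sqrt_pow2 C) by lra. apply sqrt_le_1_alt, HC.
Qed.

Lemma poisson_den_pos (r u : R) : -1 < r < 1 -> 0 < 1 + r ^ 2 - 2 * r * cos u.
Proof.
  intros Hr. pose proof (COS_bound u).
  destruct (Rle_or_lt 0 r); nra.
Qed.

Lemma continuous_const_R (c x : R) : continuous (fun _ : R => c) x.
Proof. apply (@continuous_const R_UniformSpace R_UniformSpace). Qed.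

Lemma continuous_plus_R (f g : R -> R) (x : R) :
  continuous f x -> continuous g x -> continuous (fun y => f y + g y) x.
Proof. apply (@continuous_plus R_UniformSpace R_AbsRing R_NormedModule). Qed.

Lemma continuous_minus_R (f g : R -> R) (x : R) :
  continuous f x -> continuous g x -> continuous (fun y => f y - g y) x.
Proof. apply (@continuous_minus R_UniformSpace R_AbsRing R_NormedModule). Qed.

Lemma continuous_mult_R (f g : R -> R) (x : R) :
  continuous f x -> continuous g x -> continuous (fun y => f y * g y) x.
Proof. apply (@continuous_mult R_UniformSpace R_AbsRing). Qed.

Lemma locally_unit_interval (s : R) : -1 < s < 1 -> locally s (fun y => -1 < y < 1).
Proof. intros Hs. apply (locally_interval _ s (-1) 1); simpl; auto; lra. Qed.

Lemma locally_2d_unit_interval (s t : R) : -1 < s < 1 ->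
  locally_2d (fun y _ => -1 < y < 1) s t.
Proof.
  intros Hs. destruct (locally_unit_interval s Hs) as [e He].
  exists e. intros u v Hu _. apply He. exact Hu.
Qed.

Lemma ex_RInt_continuous_R (f : R -> R) (a b : R) :
  (forall x, continuous f x) -> ex_RInt f a b.
Proof. intros Hf. apply (@ex_RInt_continuous R_CompleteNormedModule). auto. Qed.

Lemma RInt_plus_continuous (f g : R -> R) (a b : R) :
  (forall x, continuous f x) -> (forall x, continuous g x) ->
  RInt (fun x => f x + g x) a b = RInt f a b + RInt g a b.
Proof. intros Hf Hg. apply (RInt_plus f g); apply ex_RInt_continuous_R; auto. Qed.

Lemma RInt_minus_continuous (f g : R -> R) (a b : R) :
  (forall x, continuous f x) -> (forall x, continuous g x) ->
  RInt (fun x => f x - g x) a b = RInt f a b - RInt g a b.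
Proof. intros Hf Hg. apply (RInt_minus f g); apply ex_RInt_continuous_R; auto. Qed.

Lemma RInt_translate (f : R -> R) (v a b : R) : (forall x, continuous f x) ->
  RInt (fun y => f (y + v)) a b = RInt f (a + v) (b + v).
Proof.
  intros Hf.
  replace (a + v) with (1 * a + v) by ring. replace (b + v) with (1 * b + v) by ring.
  rewrite <- (RInt_comp_lin f 1 v a b) by (apply ex_RInt_continuous_R; auto).
  apply RInt_ext. intros x _. replace (1 * x + v) with (x + v) by ring. symmetry. apply Rmult_1_l.
Qed.

Lemma RInt_periodic (f : R -> R) (T a b : R) :
  (forall x, continuous f x) -> (forall x, f (x + T) = f x) ->
  RInt f a (a + T) = RInt f b (b + T).
Proof.
  intros Hf Hper.
  assert (Hex : forall c d, ex_RInt f c d) by (intros; apply ex_RInt_continuous_R; auto).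
  assert (Hshift : forall c, RInt f T (c + T) = RInt f 0 c).
  { intros c. transitivity (RInt f (0 + T) (c + T)); [now rewrite Rplus_0_l |].
    rewrite <- RInt_translate by auto. apply RInt_ext. intros x _. apply Hper. }
  assert (Hbase : forall c, RInt f c (c + T) = RInt f 0 T).
  { intros c.
    rewrite <- (RInt_Chasles f c 0 (c + T)), <- (RInt_Chasles f 0 T (c + T)), Hshift by auto.
    rewrite <- (opp_RInt_swap f c 0) by auto.
    unfold plus, opp; simpl. ring. }
  now rewrite !Hbase.
Qed.

Lemma RInt_periodic_translate (f : R -> R) (w : R) :
  (forall x, continuous f x) -> (forall x, f (x + 2 * PI) = f x) ->
  RInt (fun t => f (t - w)) (-PI) PI = RInt f (-PI) PI.
Proof.
  intros Hf Hper. rewrite (RInt_translate f (- w)) by auto.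
  replace (PI + - w) with ((-PI + - w) + 2 * PI) by ring.
  transitivity (RInt f (-PI) (-PI + 2 * PI)); [apply RInt_periodic; auto | f_equal; ring].
Qed.

(** * Expectations under the wrapped Cauchy law *)

Section WrappedCauchy.

Variable r : R.
Hypothesis Hr : -1 < r < 1.

Lemma f_WC_continuous (x : R) : continuous (f_WC r) x.
Proof.
  apply (ex_derive_continuous (f_WC r)). unfold f_WC.
  pose proof (poisson_den_pos r x Hr). pose proof PI_RGT_0. auto_derive. nra.
Qed.

Lemma continuous_f_WC_mult (F : R -> R) (x : R) :
  continuous F x -> continuous (fun u => f_WC r u * F u) x.
Proof. intros HF. apply continuous_mult_R; auto using f_WC_continuous. Qed.

Lemma is_RInt_f_WC : is_RInt (f_WC r) (-PI) PI 1.
Proof.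
  pose proof PI_RGT_0.
  set (cdf := fun u => (u + 2 * atan (r * sin u / (1 - r * cos u))) / (2 * PI)).
  assert (Hcdf : forall u, is_derive cdf u (f_WC r u)).
  { intros u. unfold cdf, f_WC.
    assert (0 < 1 - r * cos u) by (pose proof (COS_bound u); destruct (Rle_or_lt 0 r); nra).
    pose proof (poisson_den_pos r u Hr). pose proof (sin_cos_sq u).
    auto_derive; [lra |].
    set (S := sin u) in *. set (C := cos u) in *.
    assert (HS : S ^ 2 = 1 - C ^ 2) by lra. clearbody S C.
    field_simplify.
    - rewrite HS. field. nra.
    - nra.
    - repeat split; nra. }
  replace 1 with (minus (cdf PI) (cdf (-PI))).
  - apply (is_RInt_derive cdf (f_WC r)); intros; [apply Hcdf | apply f_WC_continuous].
  - unfold cdf, minus, plus, opp; simpl.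
    rewrite sin_neg, cos_neg, sin_PI, cos_PI, Ropp_0, !Rmult_0_r, !Rdiv_0_l, atan_0.
    field. lra.
Qed.

Lemma E_WC_ext (F G : R -> R) : (forall u, F u = G u) -> E_WC r F = E_WC r G.
Proof. intros HFG. unfold E_WC. apply RInt_ext. intros u _. now rewrite HFG. Qed.

Lemma E_WC_const (c : R) : E_WC r (fun _ => c) = c.
Proof.
  pose proof (is_RInt_scal _ _ _ c _ is_RInt_f_WC) as Hc.
  change (scal c 1) with (c * 1) in Hc. rewrite Rmult_1_r in Hc.
  apply is_RInt_unique, (is_RInt_ext (fun u => scal c (f_WC r u))); auto.
  intros u _. apply Rmult_comm.
Qed.

Lemma E_WC_plus (F G : R -> R) :
  (forall x, continuous F x) -> (forall x, continuous G x) ->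
  E_WC r (fun u => F u + G u) = E_WC r F + E_WC r G.
Proof.
  intros HF HG. unfold E_WC.
  rewrite <- RInt_plus_continuous by auto using continuous_f_WC_mult.
  apply RInt_ext. intros x _. apply Rmult_plus_distr_l.
Qed.

Lemma E_WC_minus (F G : R -> R) :
  (forall x, continuous F x) -> (forall x, continuous G x) ->
  E_WC r (fun u => F u - G u) = E_WC r F - E_WC r G.
Proof.
  intros HF HG. unfold E_WC.
  rewrite <- RInt_minus_continuous by auto using continuous_f_WC_mult.
  apply RInt_ext. intros x _. apply Rmult_minus_distr_l.
Qed.

End WrappedCauchy.

Lemma f_WC_periodic (r x : R) : f_WC r (x + 2 * PI) = f_WC r x.
Proof. unfold f_WC. now rewrite cos_periodic. Qed.

Lemma f_WC_half_angle_sum (r x : R) : -1 < r < 1 ->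
  f_WC r (x / 2 - PI) + f_WC r (x / 2) = 2 * f_WC (r ^ 2) x.
Proof.
  intros Hr. pose proof PI_RGT_0.
  unfold f_WC. replace (x / 2 - PI) with (x / 2 + - PI) by ring. rewrite cos_plus, cos_neg, sin_neg, cos_PI, sin_PI.
  replace (cos x) with (2 * cos (x / 2) * cos (x / 2) - 1)
    by (rewrite <- cos_2a_cos; f_equal; field).
  pose proof (poisson_den_pos r (x / 2) Hr). pose proof (poisson_den_pos (- r) (x / 2)).
  field. repeat split; nra.
Qed.

Lemma E_WC_double_angle (r : R) (F : R -> R) : -1 < r < 1 ->
  (forall x, continuous F x) -> (forall x, F (x + 2 * PI) = F x) ->
  E_WC r (fun u => F (2 * u)) = E_WC (r ^ 2) F.
Proof.
  intros Hr HF Hper. pose proof PI_RGT_0. assert (Hr2 : -1 < r ^ 2 < 1) by nra.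
  set (h := fun v => f_WC r (v / 2) * F v / 2).
  assert (Hh : forall x, continuous h x).
  { intros x. unfold h, Rdiv at 2.
    apply continuous_mult_R; [| apply continuous_const_R].
    apply continuous_mult_R; auto.
    apply (continuous_comp (fun v => v / 2) (f_WC r)); [| apply f_WC_continuous, Hr].
    apply (ex_derive_continuous (fun v => v / 2)). auto_derive. auto. }
  assert (Hdilate : E_WC r (fun u => F (2 * u)) = RInt h (-2 * PI) (2 * PI)).
  { replace (RInt h (-2 * PI) (2 * PI)) with (RInt h (2 * (-PI) + 0) (2 * PI + 0)) by (f_equal; ring).
    rewrite <- (RInt_comp_lin h 2 0) by (apply ex_RInt_continuous_R; auto).
    apply RInt_ext. intros x _. unfold h, scal. simpl. unfold mult. simpl.
    replace ((2 * x + 0) / 2) with x by field. rewrite Rplus_0_r. field. }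
  assert (Hfold : RInt h (-2 * PI) (2 * PI) = RInt (fun v => h (v - 2 * PI) + h v) 0 (2 * PI)).
  { rewrite RInt_plus_continuous; [| intros x | auto].
    - rewrite <- (RInt_Chasles h (-2 * PI) 0 (2 * PI)) by (apply ex_RInt_continuous_R; auto).
      unfold Rminus. rewrite RInt_translate by auto. unfold plus. simpl. f_equal. f_equal; ring.
    - apply (continuous_comp (fun v => v - 2 * PI) h); auto.
      apply (ex_derive_continuous (fun v => v - 2 * PI)). auto_derive. auto. }
  rewrite Hdilate, Hfold. unfold E_WC.
  transitivity (RInt (fun v => f_WC (r ^ 2) v * F v) 0 (0 + 2 * PI)).
  - rewrite Rplus_0_l. apply RInt_ext. intros v _. unfold h.
    replace (F (v - 2 * PI)) with (F v) by (rewrite <- (Hper (v - 2 * PI)); f_equal; ring).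
    replace ((v - 2 * PI) / 2) with (v / 2 - PI) by field.
    replace (f_WC (r ^ 2) v) with ((f_WC r (v / 2 - PI) + f_WC r (v / 2)) / 2)
      by (rewrite f_WC_half_angle_sum by auto; field).
    simpl. field.
  - replace PI with (-PI + 2 * PI) at 3 by ring.
    apply RInt_periodic.
    + intros x. apply continuous_f_WC_mult; auto.
    + intros x. now rewrite f_WC_periodic, Hper.
Qed.

(** * The Poisson-Jensen formula *)

(* The derivative of [ln (1 + s^2 - 2 s cos u)] in [s]. *)
Definition poisson_log_deriv (s u : R) : R :=
  (2 * s - 2 * cos u) / (1 + s ^ 2 - 2 * s * cos u).

Lemma poisson_log_deriv_continuous (s x : R) :
  -1 < s < 1 -> continuous (poisson_log_deriv s) x.
Proof.
  intros Hs. apply (ex_derive_continuous (poisson_log_deriv s)).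
  unfold poisson_log_deriv. pose proof (poisson_den_pos s x Hs). auto_derive. lra.
Qed.

Lemma E_WC_poisson_log_deriv_diag (r : R) : -1 < r < 1 ->
  E_WC r (poisson_log_deriv r) = - (2 * r / (1 - r ^ 2)).
Proof.
  intros Hr. pose proof PI_RGT_0. assert (0 < 1 - r ^ 2) by nra.
  set (c := 2 * r / (1 - r ^ 2)).
  set (h := fun u => f_WC r u * poisson_log_deriv r u + f_WC r u * c).
  set (g := fun u => - sin u / (PI * (1 + r ^ 2 - 2 * r * cos u))).
  assert (Hh : forall u, continuous h u).
  { intros u. apply continuous_plus_R; apply continuous_f_WC_mult;
      auto using poisson_log_deriv_continuous, continuous_const_R. }
  assert (Hg : forall u, is_derive g u (h u)).
  { intros u. unfold g, h, f_WC, poisson_log_deriv, c.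
    pose proof (poisson_den_pos r u Hr). pose proof (sin_cos_sq u).
    auto_derive; [nra |].
    set (S := sin u) in *. set (C := cos u) in *.
    assert (HS : S ^ 2 = 1 - C ^ 2) by lra. clearbody S C.
    assert (0 < PI * (1 + r ^ 2 - 2 * r * C) ^ 2) by (apply Rmult_lt_0_compat; nra).
    assert (0 < PI ^ 2 * (1 + r ^ 2 - 2 * r * C) ^ 2) by (apply Rmult_lt_0_compat; nra).
    field_simplify.
    - rewrite HS. field. split; nra.
    - repeat split; nra.
    - repeat split; nra. }
  assert (Hint : RInt h (-PI) PI = 0).
  { apply is_RInt_unique. replace 0 with (minus (g PI) (g (-PI))).
    - apply (is_RInt_derive g h); intros; auto.
    - unfold g, minus, plus, opp; simpl.
      rewrite sin_neg, cos_neg, sin_PI, cos_PI. field. nra. }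
  unfold E_WC.
  rewrite (RInt_ext _ (fun u => h u - f_WC r u * c))
    by (intros x _; unfold h; simpl; ring).
  rewrite RInt_minus_continuous, Hint by auto using continuous_f_WC_mult,
    continuous_const_R.
  fold (E_WC r (fun _ => c)). rewrite E_WC_const by auto. ring.
Qed.

Lemma E_WC_poisson_log_deriv (r s : R) : -1 < r < 1 -> -1 < s < 1 ->
  E_WC r (poisson_log_deriv s) = - (2 * r / (1 - r * s)).
Proof.
  intros Hr Hs. assert (0 < 1 - r * s) by nra.
  (* For [s <> r], [f_WC r * poisson_log_deriv s] is a combination of [f_WC r] and [f_WC s];
     the diagonal case needs an explicit primitive instead. *)
  destruct (Req_dec r s) as [<- | Hrs].
  { rewrite E_WC_poisson_log_deriv_diag by auto. f_equal. f_equal. ring. }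
  set (a := - (1 + r ^ 2 - 2 * r * s) / ((r - s) * (1 - r * s))).
  set (b := (1 - r ^ 2) / ((r - s) * (1 - r * s))).
  assert (Hrs' : r - s <> 0) by lra.
  unfold E_WC.
  rewrite (RInt_ext _ (fun u => f_WC r u * a + f_WC s u * b)).
  2:{ intros x _; simpl. unfold f_WC, poisson_log_deriv, a, b. pose proof PI_RGT_0.
      pose proof (poisson_den_pos r x Hr). pose proof (poisson_den_pos s x Hs).
      field. repeat split; lra. }
  rewrite RInt_plus_continuous by auto using continuous_f_WC_mult,
    continuous_const_R.
  fold (E_WC r (fun _ => a)) (E_WC s (fun _ => b)).
  rewrite !E_WC_const by auto. unfold a, b. field. lra.
Qed.

Lemma continuity_2d_pt_f_WC_poisson_log_deriv (r s t : R) : -1 < r < 1 -> -1 < s < 1 ->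
  continuity_2d_pt (fun y u => f_WC r u * poisson_log_deriv y u) s t.
Proof.
  intros Hr Hs.
  assert (Hcos : continuity_2d_pt (fun _ v => cos v) s t).
  { apply (continuity_1d_2d_pt_comp cos (fun _ v => v)).
    - apply continuity_cos.
    - apply continuity_2d_pt_id2. }
  apply continuity_2d_pt_mult.
  - apply (continuity_1d_2d_pt_comp (f_WC r) (fun _ v => v)).
    + apply continuity_pt_filterlim, f_WC_continuous, Hr.
    + apply continuity_2d_pt_id2.
  - apply (continuity_2d_pt_ext (fun y u => (2 * y - 2 * cos u) * / (1 + y * y - 2 * y * cos u))).
    { intros y u. unfold poisson_log_deriv, Rdiv. f_equal. f_equal. ring. }
    pose proof (poisson_den_pos s t Hs).
    apply continuity_2d_pt_mult; [| apply continuity_2d_pt_inv; [| simpl; nra]];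
      repeat first [ apply continuity_2d_pt_minus | apply continuity_2d_pt_plus
                   | apply continuity_2d_pt_mult | apply continuity_2d_pt_const
                   | apply continuity_2d_pt_id1 | exact Hcos ].
Qed.

Lemma is_derive_E_WC_ln_poisson (r s : R) : -1 < r < 1 -> -1 < s < 1 ->
  is_derive (fun y => E_WC r (fun u => ln (1 + y ^ 2 - 2 * y * cos u))) s
            (- (2 * r / (1 - r * s))).
Proof.
  intros Hr Hs.
  set (f := fun y u => f_WC r u * ln (1 + y ^ 2 - 2 * y * cos u)).
  assert (Hd : forall y u, -1 < y < 1 ->
                 is_derive (fun z => f z u) y (f_WC r u * poisson_log_deriv y u)).
  { intros y u Hy. unfold f, poisson_log_deriv.
    pose proof (poisson_den_pos y u Hy). auto_derive; [lra | field; lra]. }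
  assert (HD : forall y u, -1 < y < 1 ->
                 Derive (fun z => f z u) y = f_WC r u * poisson_log_deriv y u)
    by (intros; apply is_derive_unique, Hd; auto).
  rewrite <- E_WC_poisson_log_deriv by auto. unfold E_WC.
  rewrite <- (RInt_ext (fun u => Derive (fun z => f z u) s)) by (intros; apply HD; auto).
  apply is_derive_RInt_param.
  - apply (filter_imp (fun y => -1 < y < 1)); [| apply locally_unit_interval; auto].
    intros y Hy u _. eexists. apply Hd, Hy.
  - intros t _.
    apply (continuity_2d_pt_ext_loc (fun y u => f_WC r u * poisson_log_deriv y u)).
    + apply (locally_2d_impl (fun y _ => -1 < y < 1)).
      * apply locally_2d_forall. intros y u Hy. symmetry. apply HD, Hy.
      * apply locally_2d_unit_interval, Hs.
    + apply continuity_2d_pt_f_WC_poisson_log_deriv; auto.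
  - apply (filter_imp (fun y => -1 < y < 1)); [| apply locally_unit_interval; auto].
    intros y Hy. apply ex_RInt_continuous_R. intros x. apply continuous_f_WC_mult; auto.
    apply (ex_derive_continuous (fun u => ln (1 + y ^ 2 - 2 * y * cos u))).
    pose proof (poisson_den_pos y x Hy). auto_derive. lra.
Qed.

Lemma E_WC_ln_poisson (r s : R) : -1 < r < 1 -> -1 < s < 1 ->
  E_WC r (fun u => ln (1 + s ^ 2 - 2 * s * cos u)) = 2 * ln (1 - r * s).
Proof.
  intros Hr Hs.
  set (H := fun y => E_WC r (fun u => ln (1 + y ^ 2 - 2 * y * cos u)) - 2 * ln (1 - r * y)).
  assert (HD : forall y, -1 < y < 1 -> is_derive H y 0).
  { intros y Hy. assert (0 < 1 - r * y) by nra.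
    replace 0 with (- (2 * r / (1 - r * y)) - 2 * (- r / (1 - r * y))) by (field; lra).
    apply (is_derive_minus _ (fun y => 2 * ln (1 - r * y))).
    - apply is_derive_E_WC_ln_poisson; auto.
    - auto_derive; [lra | field; lra]. }
  assert (H0 : H 0 = 0).
  { unfold H. transitivity (E_WC r (fun _ => 0) - 2 * ln 1).
    - f_equal; [| do 2 f_equal; ring].
      unfold E_WC. apply RInt_ext. intros x _.
      replace (1 + 0 ^ 2 - 2 * 0 * cos x) with 1 by ring. now rewrite ln_1.
    - rewrite E_WC_const, ln_1 by auto. ring. }
  assert (Hbetween : forall x, Rmin 0 s <= x <= Rmax 0 s -> -1 < x < 1)
    by (intros x; unfold Rmin, Rmax; destruct (Rle_dec 0 s); lra).
  destruct (MVT_gen H 0 s (fun _ => 0)) as [c [_ Hc]].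
  - intros x Hx. apply HD, Hbetween. lra.
  - intros x Hx. apply continuity_pt_filterlim, (ex_derive_continuous H).
    eexists. apply HD, Hbetween, Hx.
  - unfold H in Hc, H0. lra.
Qed.

(** * The stretched angle *)

Definition stretch_weight (L u : R) : R := cos u ^ 2 + L * sin u ^ 2.

Lemma stretch_weight_pos (L u : R) : 0 < L -> 0 < stretch_weight L u.
Proof.
  intros HL. unfold stretch_weight. pose proof (sin_cos_sq u).
  destruct (Rle_or_lt 1 L); nra.
Qed.

Lemma stretch_weight_sin (L u : R) : 1 + (L - 1) * sin u ^ 2 = stretch_weight L u.
Proof. unfold stretch_weight. pose proof (sin_cos_sq u). nra. Qed.

Lemma continuous_ln_stretch_weight (L x : R) : 0 < L ->
  continuous (fun u => ln (stretch_weight L u)) x.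
Proof.
  intros HL. apply (ex_derive_continuous (fun u => ln (stretch_weight L u))).
  pose proof (stretch_weight_pos L x HL). unfold stretch_weight in *. auto_derive. lra.
Qed.

Lemma E_WC_ln_stretch_weight (d L : R) : -1 < d < 1 -> 0 < L ->
  E_WC d (fun u => ln (stretch_weight L u))
  = 2 * ln ((sqrt L * (1 - d ^ 2) + 1 + d ^ 2) / 2).
Proof.
  intros Hd HL.
  pose proof (sqrt_lt_R0 L HL) as Hm. pose proof (sqrt_sqrt L (Rlt_le _ _ HL)) as Hm2.
  set (m := sqrt L) in *.
  set (q := (m - 1) / (m + 1)).
  assert (Hq : -1 < q < 1).
  { unfold q. split; apply (Rmult_lt_reg_r (m + 1)); try lra; field_simplify; lra. }
  set (F := fun v => ln (1 + q ^ 2 - 2 * q * cos v)).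
  assert (HF : forall x, continuous F x).
  { intros x. apply (ex_derive_continuous F). unfold F.
    pose proof (poisson_den_pos q x Hq). auto_derive. lra. }
  assert (Hsplit : forall u, ln (stretch_weight L u) = 2 * ln ((1 + m) / 2) + F (2 * u)).
  { intros u. unfold F. pose proof (poisson_den_pos q (2 * u) Hq).
    replace (2 * ln ((1 + m) / 2)) with (ln (((1 + m) / 2) ^ 2))
      by (rewrite ln_pow by lra; simpl; ring).
    rewrite <- ln_mult by (try apply pow_lt; lra). f_equal.
    unfold stretch_weight. rewrite cos_2a, <- Hm2.
    transitivity (((1 + m) / 2) ^ 2 * ((1 + q ^ 2) * (sin u ^ 2 + cos u ^ 2)
                    - 2 * q * (cos u * cos u - sin u * sin u))).
    - unfold q. field. lra.
    - rewrite sin_cos_sq. ring. }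
  assert (Hdq : 0 < 1 - d ^ 2 * q) by nra.
  rewrite (E_WC_ext d _ _ Hsplit), E_WC_plus, E_WC_const, E_WC_double_angle; auto.
  unfold F at 1. rewrite E_WC_ln_poisson by nra.
  - replace ((m * (1 - d ^ 2) + 1 + d ^ 2) / 2) with ((1 + m) / 2 * (1 - d ^ 2 * q))
      by (unfold q; field; lra).
    rewrite ln_mult by lra. ring.
  - intros x. unfold F. now rewrite cos_periodic.
  - intros x. apply continuous_const_R.
  - intros x. apply (continuous_comp (fun u => 2 * u) F); auto.
    apply (ex_derive_continuous (fun u => 2 * u)). auto_derive. auto.
Qed.

(* The continuous lift of the argument of [cos u + i sqrt L sin u]. *)
Definition stretch_angle (L u : R) : R :=
  u + atan ((sqrt L - 1) * sin u * cos u / (cos u ^ 2 + sqrt L * sin u ^ 2)).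

Lemma is_derive_stretch_angle (L u : R) : 0 < L ->
  is_derive (stretch_angle L) u (sqrt L / stretch_weight L u).
Proof.
  intros HL. unfold stretch_angle, stretch_weight.
  pose proof (sqrt_lt_R0 L HL) as Hm. pose proof (sqrt_sqrt L (Rlt_le _ _ HL)) as Hm2.
  set (m := sqrt L) in *.
  pose proof (stretch_weight_pos m u Hm) as Hwm. pose proof (stretch_weight_pos L u HL) as HwL.
  unfold stretch_weight in *. pose proof (sin_cos_sq u).
  auto_derive; [lra |].
  set (S := sin u) in *. set (C := cos u) in *.
  assert (HS : S ^ 2 = 1 - C ^ 2) by lra. clearbody S C. rewrite <- Hm2 in *.
  field_simplify.
  - replace (S ^ 4) with ((S ^ 2) ^ 2) by ring. rewrite HS. field. rewrite HS in HwL. nra.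
  - nra.
  - split; nra.
Qed.

Lemma stretch_angle_PI (L : R) : stretch_angle L PI = PI.
Proof.
  unfold stretch_angle. rewrite sin_PI, !Rmult_0_r, Rmult_0_l, Rdiv_0_l, atan_0. ring.
Qed.

Lemma stretch_angle_opp_PI (L : R) : stretch_angle L (-PI) = -PI.
Proof.
  unfold stretch_angle. rewrite sin_neg, sin_PI, Ropp_0, !Rmult_0_r, Rmult_0_l, Rdiv_0_l, atan_0.
  ring.
Qed.

Lemma cos_stretch_angle (L u : R) : 0 < L ->
  cos (stretch_angle L u) = cos u / sqrt (stretch_weight L u).
Proof.
  intros HL. unfold stretch_angle.
  pose proof (sqrt_lt_R0 L HL) as Hm. pose proof (sqrt_sqrt L (Rlt_le _ _ HL)) as Hm2.
  set (m := sqrt L) in *.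
  pose proof (stretch_weight_pos m u Hm) as HD. pose proof (stretch_weight_pos L u HL) as HW.
  unfold stretch_weight in HD. set (D := cos u ^ 2 + m * sin u ^ 2) in *.
  set (t := (m - 1) * sin u * cos u / D).
  assert (Ht : 1 + t² = stretch_weight L u / D ^ 2).
  { replace (stretch_weight L u) with ((cos u ^ 2 + m * m * sin u ^ 2) * (sin u ^ 2 + cos u ^ 2))
      by (rewrite sin_cos_sq, Hm2; unfold stretch_weight; ring).
    unfold t, D, Rsqr. field. exact (Rgt_not_eq _ _ HD). }
  rewrite cos_plus, cos_atan, sin_atan, Ht, sqrt_div_alt, sqrt_pow2 by (try apply pow_lt; lra).
  pose proof (sqrt_lt_R0 _ HW).
  transitivity ((cos u * D - (m - 1) * sin u ^ 2 * cos u) / sqrt (stretch_weight L u)).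
  - unfold t. field. lra.
  - f_equal. transitivity (cos u * (sin u ^ 2 + cos u ^ 2)); [unfold D; ring |].
    rewrite sin_cos_sq. ring.
Qed.

Lemma GCPC_b_stretch_angle (L u : R) : 0 < L ->
  cos (stretch_angle L u) ^ 2 + sin (stretch_angle L u) ^ 2 / L = / stretch_weight L u.
Proof.
  intros HL. pose proof (stretch_weight_pos L u HL) as HW.
  assert (Hc2 : cos (stretch_angle L u) ^ 2 = cos u ^ 2 / stretch_weight L u).
  { rewrite cos_stretch_angle by auto. unfold Rdiv.
    rewrite Rpow_mult_distr, pow_inv, pow2_sqrt by lra. reflexivity. }
  replace (sin (stretch_angle L u) ^ 2) with (1 - cos (stretch_angle L u) ^ 2)
    by (pose proof (sin_cos_sq (stretch_angle L u)); lra).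
  assert (HWc : stretch_weight L u = cos u ^ 2 + L * (1 - cos u ^ 2))
    by (unfold stretch_weight; pose proof (sin_cos_sq u); nra).
  rewrite Hc2, HWc in *. field. split; lra.
Qed.

Lemma RInt_stretch_angle (L : R) (f : R -> R) : 0 < L -> (forall x, continuous f x) ->
  RInt f (-PI) PI
  = RInt (fun u => sqrt L / stretch_weight L u * f (stretch_angle L u)) (-PI) PI.
Proof.
  intros HL Hf.
  rewrite <- stretch_angle_PI at 2. rewrite <- (stretch_angle_opp_PI L) at 1.
  symmetry. apply (RInt_comp f (stretch_angle L) (fun u => sqrt L / stretch_weight L u)).
  - intros. apply Hf.
  - intros x _. split; [apply is_derive_stretch_angle, HL |].
    apply (ex_derive_continuous (fun u => sqrt L / stretch_weight L u)).
    pose proof (stretch_weight_pos L x HL). unfold stretch_weight in *. auto_derive. lra.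
Qed.

Lemma CIPC_den_pos (g C : R) : 0 <= g -> C <= 1 -> 0 < sqrt (g ^ 2 + 1) - g * C.
Proof.
  intros Hg HC. assert (H1 : 0 < g ^ 2 + 1) by nra.
  pose proof (sqrt_lt_R0 _ H1). pose proof (pow2_sqrt _ (Rlt_le _ _ H1)).
  set (s := sqrt (g ^ 2 + 1)) in *.
  assert (g < s) by nra. nra.
Qed.

Lemma delta_of_spec (g : R) : 0 <= g ->
  0 <= delta_of g < 1 /\ g * (1 - delta_of g ^ 2) = 2 * delta_of g
  /\ sqrt (g ^ 2 + 1) * (1 - delta_of g ^ 2) = 1 + delta_of g ^ 2.
Proof.
  intros Hg. unfold delta_of. destruct (Req_EM_T g 0) as [-> | Hg0].
  { replace (0 ^ 2 + 1) with 1 by ring. rewrite sqrt_1. repeat split; lra. }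
  assert (H1 : 0 < g ^ 2 + 1) by nra.
  pose proof (pow2_sqrt _ (Rlt_le _ _ H1)) as Hc0. pose proof (CIPC_den_pos g 1 Hg).
  set (c0 := sqrt (g ^ 2 + 1)) in *. set (d := (c0 - 1) / g).
  assert (Hdg : d * g = c0 - 1) by (unfold d; field; lra).
  assert (Hdc : d * (c0 + 1) = g).
  { apply (Rmult_eq_reg_r g); [| lra].
    replace (d * (c0 + 1) * g) with (d * g * (c0 + 1)) by ring. rewrite Hdg. nra. }
  assert (0 <= d) by (unfold d; apply Rdiv_le_0_compat; nra).
  repeat split; nra.
Qed.

Lemma CIPC_den_delta_of (g C : R) : 0 <= g ->
  sqrt (g ^ 2 + 1) - g * C
  = (1 + delta_of g ^ 2 - 2 * delta_of g * C) / (1 - delta_of g ^ 2).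
Proof.
  intros Hg. destruct (delta_of_spec g Hg) as (Hd & Hgd & Hcd).
  rewrite <- Hcd, <- Hgd. field. nra.
Qed.

Lemma f_WC_delta_of (g u : R) : 0 <= g -> f_WC (delta_of g) u = f_CIPC 0 g u.
Proof.
  intros Hg. destruct (delta_of_spec g Hg) as [Hd _]. pose proof PI_RGT_0.
  pose proof (poisson_den_pos (delta_of g) u ltac:(lra)).
  unfold f_WC, f_CIPC. rewrite Rminus_0_r, CIPC_den_delta_of by auto.
  field. repeat split; nra.
Qed.

Lemma continuous_ln_CIPC_den (g x : R) : 0 <= g ->
  continuous (fun u => ln (sqrt (g ^ 2 + 1) - g * cos u)) x.
Proof.
  intros Hg. apply (ex_derive_continuous (fun u => ln (sqrt (g ^ 2 + 1) - g * cos u))).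
  pose proof (CIPC_den_pos g (cos x) Hg (proj2 (COS_bound _))). auto_derive. simpl in *. lra.
Qed.

Lemma E_WC_ln_CIPC_den (g : R) : 0 <= g ->
  E_WC (delta_of g) (fun u => ln (sqrt (g ^ 2 + 1) - g * cos u)) = ln (1 - delta_of g ^ 2).
Proof.
  intros Hg. destruct (delta_of_spec g Hg) as [Hd _].
  assert (0 < 1 - delta_of g ^ 2) by nra.
  assert (Hcont : forall x, continuous (fun u => ln (1 + delta_of g ^ 2 - 2 * delta_of g * cos u)) x).
  { intros x. apply (ex_derive_continuous (fun u => ln (1 + delta_of g ^ 2 - 2 * delta_of g * cos u))).
    pose proof (poisson_den_pos (delta_of g) x ltac:(lra)). auto_derive. lra. }
  rewrite (E_WC_ext _ _ (fun u => ln (1 + delta_of g ^ 2 - 2 * delta_of g * cos u) - ln (1 - delta_of g ^ 2))).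
  - rewrite E_WC_minus, E_WC_ln_poisson, E_WC_const; auto using continuous_const_R; try lra.
    replace (delta_of g * delta_of g) with (delta_of g ^ 2) by ring. ring.
  - intros u. rewrite CIPC_den_delta_of by auto.
    apply ln_div; auto. apply poisson_den_pos. lra.
Qed.

Lemma GCPC_b_pos (L p : R) : 0 < L -> 0 < cos p ^ 2 + sin p ^ 2 / L.
Proof.
  intros HL. replace (cos p ^ 2 + sin p ^ 2 / L) with (stretch_weight (/ L) p).
  - apply stretch_weight_pos, Rinv_0_lt_compat, HL.
  - unfold stretch_weight. field. lra.
Qed.

Lemma GCPC_den_pos (g L p : R) : 0 <= g -> 0 < L ->
  0 < (cos p ^ 2 + sin p ^ 2 / L) * sqrt (g ^ 2 + 1)
      - g * cos p * sqrt (cos p ^ 2 + sin p ^ 2 / L).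
Proof.
  intros Hg HL. pose proof (GCPC_b_pos L p HL) as Hb.
  set (b := cos p ^ 2 + sin p ^ 2 / L) in *.
  pose proof (sqrt_lt_R0 _ Hb). pose proof (sqrt_sqrt _ (Rlt_le _ _ Hb)).
  assert (Hcb : cos p / sqrt b <= 1).
  { apply div_sqrt_le_1; auto. unfold b. pose proof (pow2_ge_0 (sin p)).
    assert (0 <= sin p ^ 2 / L) by (apply Rdiv_le_0_compat; lra). lra. }
  set (sb := sqrt b) in *.
  replace (b * sqrt (g ^ 2 + 1) - g * cos p * sb)
    with (b * (sqrt (g ^ 2 + 1) - g * (cos p / sb))) by (rewrite <- H0; field; lra).
  apply Rmult_lt_0_compat; auto using CIPC_den_pos.
Qed.

Lemma f_GCPC_pos (g L p : R) : 0 <= g -> 0 < L -> 0 < f_GCPC 0 g L p.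
Proof.
  intros Hg HL. unfold f_GCPC. cbv zeta. rewrite Rminus_0_r.
  pose proof (GCPC_den_pos g L p Hg HL). pose proof (sqrt_lt_R0 L HL). pose proof PI_RGT_0.
  apply Rdiv_lt_0_compat; [lra |]. apply Rmult_lt_0_compat; [apply Rmult_lt_0_compat |]; lra.
Qed.

Lemma f_CIPC_pos (g p : R) : 0 <= g -> 0 < f_CIPC 0 g p.
Proof.
  intros Hg. unfold f_CIPC. pose proof (CIPC_den_pos g (cos (p - 0)) Hg (proj2 (COS_bound _))).
  pose proof PI_RGT_0. apply Rdiv_lt_0_compat; [lra |]. apply Rmult_lt_0_compat; lra.
Qed.

Lemma ex_derive_f_GCPC (g L p : R) : 0 <= g -> 0 < L -> ex_derive (f_GCPC 0 g L) p.
Proof.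
  intros Hg HL. pose proof (GCPC_den_pos g L p Hg HL). pose proof (GCPC_b_pos L p HL).
  pose proof (sqrt_lt_R0 L HL). pose proof PI_RGT_0.
  unfold f_GCPC. auto_derive. rewrite Ropp_0, Rplus_0_r.
  simpl in H, H0. unfold Rdiv in H, H0. repeat split; try lra.
  apply Rgt_not_eq, Rmult_lt_0_compat; [apply Rmult_lt_0_compat |]; lra.
Qed.

Lemma ex_derive_f_CIPC (g p : R) : 0 <= g -> ex_derive (f_CIPC 0 g) p.
Proof.
  intros Hg. pose proof (CIPC_den_pos g (cos p) Hg (proj2 (COS_bound _))). pose proof PI_RGT_0.
  unfold f_CIPC. auto_derive. rewrite Ropp_0, Rplus_0_r.
  simpl in H. apply Rgt_not_eq, Rmult_lt_0_compat; lra.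
Qed.

Lemma f_GCPC_stretch_angle (g L u : R) : 0 <= g -> 0 < L ->
  f_GCPC 0 g L (stretch_angle L u)
  = stretch_weight L u / (2 * PI * sqrt L * (sqrt (g ^ 2 + 1) - g * cos u)).
Proof.
  intros Hg HL. pose proof (stretch_weight_pos L u HL) as HW.
  pose proof (sqrt_lt_R0 _ HW). pose proof (sqrt_sqrt _ (Rlt_le _ _ HW)).
  pose proof (sqrt_lt_R0 L HL). pose proof PI_RGT_0.
  pose proof (CIPC_den_pos g (cos u) Hg (proj2 (COS_bound _))).
  unfold f_GCPC. cbv zeta.
  rewrite Rminus_0_r, GCPC_b_stretch_angle, sqrt_inv, cos_stretch_angle by auto.
  set (sW := sqrt (stretch_weight L u)) in *. rewrite <- H0. field. repeat split; lra.
Qed.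

Lemma f_CIPC_stretch_angle (g L u : R) : 0 < L ->
  f_CIPC 0 g (stretch_angle L u)
  = 1 / (2 * PI * (sqrt (g ^ 2 + 1) - g * cos u / sqrt (1 + (L - 1) * sin u ^ 2))).
Proof.
  intros HL. unfold f_CIPC. rewrite Rminus_0_r, cos_stretch_angle, stretch_weight_sin by auto.
  replace (g * cos u / sqrt (stretch_weight L u)) with (g * (cos u / sqrt (stretch_weight L u)))
    by (unfold Rdiv; ring).
  reflexivity.
Qed.

Lemma CIPC_den_stretch_pos (g L u : R) : 0 <= g -> 0 < L ->
  0 < sqrt (g ^ 2 + 1) - g * cos u / sqrt (1 + (L - 1) * sin u ^ 2).
Proof.
  intros Hg HL. rewrite stretch_weight_sin. unfold Rdiv. rewrite Rmult_assoc.
  apply CIPC_den_pos; auto. apply div_sqrt_le_1; [apply stretch_weight_pos, HL |].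
  unfold stretch_weight. pose proof (pow2_ge_0 (sin u)). nra.
Qed.

Lemma continuous_ln_CIPC_den_stretch (g L x : R) : 0 <= g -> 0 < L ->
  continuous (fun u => ln (sqrt (g ^ 2 + 1) - g * cos u / sqrt (1 + (L - 1) * sin u ^ 2))) x.
Proof.
  intros Hg HL.
  apply (ex_derive_continuous
           (fun u => ln (sqrt (g ^ 2 + 1) - g * cos u / sqrt (1 + (L - 1) * sin u ^ 2)))).
  pose proof (CIPC_den_stretch_pos g L x Hg HL).
  pose proof (stretch_weight_pos L x HL). rewrite <- stretch_weight_sin in *.
  auto_derive. simpl in *. unfold Rdiv in *. repeat split; try lra.
  apply Rgt_not_eq, sqrt_lt_R0. lra.
Qed.

Definition KL_integrand (g L theta : R) : R :=
  f_GCPC 0 g L theta * ln (f_GCPC 0 g L theta / f_CIPC 0 g theta).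

Lemma KL_integrand_continuous (g L x : R) : 0 <= g -> 0 < L ->
  continuous (KL_integrand g L) x.
Proof.
  intros Hg HL. apply (ex_derive_continuous (KL_integrand g L)). unfold KL_integrand.
  destruct (ex_derive_f_GCPC g L x Hg HL) as [dG HG].
  destruct (ex_derive_f_CIPC g x Hg) as [dC HC].
  pose proof (f_GCPC_pos g L x Hg HL). pose proof (f_CIPC_pos g x Hg).
  eexists. apply (is_derive_mult (f_GCPC 0 g L)); [exact HG | | intros; apply Rmult_comm].
  apply (is_derive_comp ln (fun p => f_GCPC 0 g L p / f_CIPC 0 g p)).
  - apply is_derive_ln, Rdiv_lt_0_compat; auto.
  - apply (is_derive_div (f_GCPC 0 g L)); [exact HG | exact HC | lra].
Qed.

Lemma KL_integrand_periodic (g L x : R) : KL_integrand g L (x + 2 * PI) = KL_integrand g L x.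
Proof.
  unfold KL_integrand, f_GCPC, f_CIPC. now rewrite !Rminus_0_r, cos_periodic, sin_periodic.
Qed.

Lemma KL_GCPC_CIPC_rotate (omega g L : R) : 0 <= g -> 0 < L ->
  KL_GCPC_CIPC omega g L = RInt (KL_integrand g L) (-PI) PI.
Proof.
  intros Hg HL. unfold KL_GCPC_CIPC.
  rewrite <- (RInt_periodic_translate (KL_integrand g L) omega).
  - apply RInt_ext. intros x _. unfold KL_integrand, f_GCPC, f_CIPC. now rewrite !Rminus_0_r.
  - intros x. apply KL_integrand_continuous; auto.
  - apply KL_integrand_periodic.
Qed.

Lemma KL_integrand_stretch_angle (g L u : R) : 0 <= g -> 0 < L ->
  sqrt L / stretch_weight L u * KL_integrand g L (stretch_angle L u)
  = f_WC (delta_of g) u *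
      (- (1 / 2) * ln L + ln (stretch_weight L u) - ln (sqrt (g ^ 2 + 1) - g * cos u)
       + ln (sqrt (g ^ 2 + 1) - g * cos u / sqrt (1 + (L - 1) * sin u ^ 2))).
Proof.
  intros Hg HL. pose proof (stretch_weight_pos L u HL) as HW.
  pose proof (sqrt_lt_R0 L HL). pose proof PI_RGT_0.
  pose proof (CIPC_den_pos g (cos u) Hg (proj2 (COS_bound _))) as HA.
  pose proof (CIPC_den_stretch_pos g L u Hg HL) as HB.
  unfold KL_integrand.
  rewrite f_GCPC_stretch_angle, f_CIPC_stretch_angle, f_WC_delta_of by auto.
  unfold f_CIPC. rewrite Rminus_0_r.
  set (W := stretch_weight L u) in *. set (A := sqrt (g ^ 2 + 1) - g * cos u) in *.
  set (B := sqrt (g ^ 2 + 1) - g * cos u / sqrt (1 + (L - 1) * sin u ^ 2)) in *.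
  replace (W / (2 * PI * sqrt L * A) / (1 / (2 * PI * B))) with (W * B / (sqrt L * A))
    by (field; repeat split; lra).
  rewrite ln_div, !ln_mult, ln_sqrt by (try apply Rmult_lt_0_compat; lra).
  field. repeat split; lra.
Qed.

Theorem mainTheorem6 (lambda gamma omega : R)
  (Hlambda : 0 < lambda) (Hgamma : 0 <= gamma)
  (Homega : -PI <= omega <= PI) :
  let delta := delta_of gamma in
  KL_GCPC_CIPC omega gamma lambda =
    - (1/2) * ln lambda
    + 2 * ln ((sqrt lambda * (1 - delta^2) + 1 + delta^2) / 2)
    - ln (1 - delta^2)
    + E_WC delta (fun psi =>
        ln (sqrt (gamma^2 + 1) -
            gamma * cos psi / sqrt (1 + (lambda - 1) * (sin psi)^2))).
Proof.
  intros delta. subst delta.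
  destruct (delta_of_spec gamma Hgamma) as [Hdelta _].
  rewrite KL_GCPC_CIPC_rotate, (RInt_stretch_angle lambda)
    by auto using KL_integrand_continuous.
  transitivity (E_WC (delta_of gamma) (fun u =>
      - (1 / 2) * ln lambda + ln (stretch_weight lambda u)
      - ln (sqrt (gamma ^ 2 + 1) - gamma * cos u)
      + ln (sqrt (gamma ^ 2 + 1) - gamma * cos u / sqrt (1 + (lambda - 1) * sin u ^ 2)))).
  { apply RInt_ext. intros u _. apply KL_integrand_stretch_angle; auto. }
  rewrite E_WC_plus, E_WC_minus, E_WC_plus, E_WC_const, E_WC_ln_stretch_weight,
    E_WC_ln_CIPC_den by (auto using continuous_plus_R, continuous_minus_R, continuous_const_R,
      continuous_ln_stretch_weight, continuous_ln_CIPC_den, continuous_ln_CIPC_den_stretch; lra).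
  ring.
Qed.
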